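(* If $S\subseteq\mathbb{N}^d$ is a quasi-irreducible GNS, then $\tau(S)\le t(S)\le 2\tau(S)$.
   Context: $\mathbb{N}=\{0,1,2,\dots\}$. A GNS is a submonoid $S\subseteq\mathbb{N}^d$ with finite complement $\mathcal{H}(S)=\mathbb{N}^d\setminus S$ (gaps). A relaxed monomial order is a total order $\prec$ on $\mathbb{N}^d$ with (i) $v\prec w\Rightarrow v\prec w+u$ for all $u\in\mathbb{N}^d$, (ii) $0\prec v$ for all $v\neq0$. A gap is Frobenius allowable if it equals $\max_\prec\mathcal{H}(S)$ for some relaxed monomial order; $FA(S)$ is their set and $\tau(S)=|FA(S)|$. A gap $P$ is pseudo-Frobenius if $P+s\in S$ for all nonzero $s\in S$; $PF(S)$ is their set and $t(S)=|PF(S)|$. $S$ is quasi-irreducible if for every $x\in\mathcal{H}(S)$, either $2x\in FA(S)$ or there is $F\in FA(S)$ with $F-x\in S$. *)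

From HB Require Import structures.
From mathcomp Require Import all_boot.
From mathcomp Require Import finmap.
From mathcomp Require Import boolp.

Set Implicit Arguments.
Unset Strict Implicit.
Unset Printing Implicit Defensive.

Local Open Scope fset_scope.

Definition vec (d : nat) := {ffun 'I_d -> nat}.

Definition vzero {d : nat} : vec d := [ffun _ => 0%N].
Definition vadd {d : nat} (u v : vec d) : vec d := [ffun i => (u i + v i)%N].

(* A generalized numerical semigroup (GNS) in N^d is given by its finite
   set of gaps H; S = N^d \ H.  The GNS condition: S is a submonoid. *)
Definition inS {d : nat} (H : {fset vec d}) (v : vec d) : Prop := v \notin H.

Definition is_GNS {d : nat} (H : {fset vec d}) : Prop :=
  inS H vzero /\ (forall u v, inS H u -> inS H v -> inS H (vadd u v)).

Definition relaxed_monomial_order {d : nat} (lt : vec d -> vec d -> Prop) : Prop :=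
  [/\ (forall v, ~ lt v v),
      (forall u v w, lt u v -> lt v w -> lt u w),
      (forall u v, u = v \/ lt u v \/ lt v u),
      (forall v w u, lt v w -> lt v (vadd w u)) &
      (forall v, v <> vzero -> lt vzero v)].

Definition is_max_wrt {d : nat} (lt : vec d -> vec d -> Prop) (H : {fset vec d})
  (P : vec d) : Prop :=
  P \in H /\ (forall h, h \in H -> h <> P -> lt h P).

Definition frob_allowable {d : nat} (H : {fset vec d}) (P : vec d) : Prop :=
  exists lt : vec d -> vec d -> Prop, relaxed_monomial_order lt /\ is_max_wrt lt H P.

Definition FA {d : nat} (H : {fset vec d}) : {fset vec d} :=
  [fset P in H | `[< frob_allowable H P >]].

Definition tau {d : nat} (H : {fset vec d}) : nat := #|` FA H|.

Definition pseudo_frobenius {d : nat} (H : {fset vec d}) (P : vec d) : Prop :=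
  P \in H /\ (forall s, inS H s -> s <> vzero -> inS H (vadd P s)).

Definition PF {d : nat} (H : {fset vec d}) : {fset vec d} :=
  [fset P in H | `[< pseudo_frobenius H P >]].

Definition t_type {d : nat} (H : {fset vec d}) : nat := #|` PF H|.

(* Quasi-irreducibility: for every gap x, 2x is Frobenius allowable or
   there is F in FA(S) with F - x in S (i.e. F = x + s with s in S). *)
Definition quasi_irreducible {d : nat} (H : {fset vec d}) : Prop :=
  forall x, x \in H ->
    frob_allowable H (vadd x x) \/
    exists F s, frob_allowable H F /\ inS H s /\ F = vadd x s.

From mathcomp Require Import all_boot finmap.
From mathcomp Require Import boolp.

(* The lower bound holds for every finite set of gaps: the maximum P of the
   gaps for a relaxed monomial order cannot have a gap P + s above it with
   s <> 0, since P + s would be both below P and above P + s.  Hence every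
   Frobenius allowable gap is pseudo-Frobenius, i.e. FA(S) is a subset of PF(S).

   For the upper bound, let P be pseudo-Frobenius.  Quasi-irreducibility gives
   either 2P in FA(S), or a gap F in FA(S) with F = P + s, s in S; as P is
   pseudo-Frobenius the latter forces s = 0, i.e. P in FA(S).  So every P in
   PF(S) has P or 2P in FA(S), and since doubling is injective, an elementary
   counting lemma on finite sets bounds |PF(S)| by 2 |FA(S)|.
   Neither bound uses that S is closed under addition. *)

Set Implicit Arguments.
Unset Strict Implicit.
Unset Printing Implicit Defensive.

Local Open Scope fset_scope.

Lemma card_le_double (K : choiceType) (f : K -> K) (A B : {fset K}) :
  injective f -> {in A, forall x, x \in B \/ f x \in B} ->
  (#|` A| <= 2 * #|` B|)%N.
Proof.
move=> f_inj AB; pose A' := [fset x in A | f x \in B].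
have A_sub : A `<=` B `|` A'.
  apply/fsubsetP=> x xA; rewrite in_fsetU !inE /=.
  by case: (AB x xA) => -> //; rewrite xA orbT.
have cardA' : (#|` A'| <= #|` B|)%N.
  have <- : #|` [fset f x | x in A']| = #|` A'| by exact: card_imfset.
  apply: fsubset_leq_card.
  by apply/fsubsetP=> _ /imfsetP [x /= /[!inE] /andP[_ fxB] ->].
apply: leq_trans (fsubset_leq_card A_sub) _.
apply: leq_trans (leq_card_fsetU _ _) _.
by rewrite mul2n -addnn leq_add2l.
Qed.

Lemma vadd_eq_self d (F s : vec d) : vadd F s = F -> s = vzero.
Proof.
move=> eFs; apply/ffunP=> i; have := congr1 (fun f : vec d => f i) eFs.
by rewrite /vadd /vzero !ffunE => /eqP; rewrite -{2}[F i]addn0 eqn_add2l => /eqP.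
Qed.

Lemma vadd0 d (x : vec d) : vadd x vzero = x.
Proof. by apply/ffunP=> i; rewrite /vadd /vzero !ffunE addn0. Qed.

Lemma vdouble_inj d : injective (fun x : vec d => vadd x x).
Proof.
move=> x y exy; apply/ffunP=> i; have := congr1 (fun f : vec d => f i) exy.
by rewrite /vadd !ffunE !addnn => /(congr1 half); rewrite !doubleK.
Qed.

Lemma inFA d (H : {fset vec d}) P : (P \in FA H) <-> frob_allowable H P.
Proof.
rewrite !inE; split=> [/andP[_ /asboolP] //|fa].
by apply/andP; split; [case: fa => lt [_ []] | exact/asboolP].
Qed.

Lemma inPF d (H : {fset vec d}) P : (P \in PF H) <-> pseudo_frobenius H P.
Proof.
rewrite !inE; split=> [/andP[_ /asboolP] //|pf].
by apply/andP; split; [case: pf | exact/asboolP].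
Qed.

Lemma FA_PF d (H : {fset vec d}) P : frob_allowable H P -> pseudo_frobenius H P.
Proof.
case=> lt [[lt_irr _ _ lt_addr _] [PH P_max]]; split=> // s _ s0.
apply/negP=> Ps_gap; have [eq_Ps|/eqP ne_Ps] := eqVneq (vadd P s) P.
  exact: s0 (vadd_eq_self eq_Ps).
exact: lt_irr _ (lt_addr _ _ s (P_max _ Ps_gap ne_Ps)).
Qed.

Lemma PF_gap_above d (H : {fset vec d}) P s :
  pseudo_frobenius H P -> inS H s -> vadd P s \in H -> s = vzero.
Proof.
move=> [_ P_pf] Ss Ps_gap; apply: contrapT => s0.
by have := P_pf s Ss s0; rewrite /inS Ps_gap.
Qed.

Lemma quasi_irreducible_PF d (H : {fset vec d}) P :
  quasi_irreducible H -> pseudo_frobenius H P ->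
  P \in FA H \/ vadd P P \in FA H.
Proof.
move=> qi P_pf; case: (qi P P_pf.1) => [fa2P|[F [s [faF [Ss eF]]]]].
  by right; apply/inFA.
left; apply/inFA; suff s0 : s = vzero by rewrite -(vadd0 P) -s0 -eF.
by apply: PF_gap_above P_pf Ss _; rewrite -eF; case: faF => lt [_ []].
Qed.

Theorem corollary3p4 (d : nat) (H : {fset vec d}) :
  is_GNS H -> quasi_irreducible H ->
  (tau H <= t_type H <= 2 * tau H)%N.
Proof.
move=> _ qi; apply/andP; split.
  apply: fsubset_leq_card; apply/fsubsetP=> P /inFA faP.
  exact/inPF/FA_PF.
apply: card_le_double (@vdouble_inj d) _ => P /inPF P_pf.
exact: quasi_irreducible_PF.
Qed.
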